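(* Let $N\in\mathbb N$, $\Sigma_N=\{1,\ldots,N\}^{\mathbb Z}$ with the shift $\sigma$, $I=[0,1]$, and let $f_1,\ldots,f_N\colon I\to f_i(I)\subset I$ be $C^1$-diffeomorphisms onto their images. Let $F\colon\Sigma_N\times I\to\Sigma_N\times I$, $F(\xi,p)=(\sigma(\xi),f_{\xi_0}(p))$, and let $\Lambda=\bigcap_{n\ge0}F^n(\Sigma_N\times I)$. Then for every $F$-invariant hyperbolic set $H\subset\Lambda$ there exists $M\ge1$ such that $\#H_\xi\le M$ for all $\xi\in\Sigma_N$, where $H_\xi:=\Pi_2(H\cap(\{\xi\}\times I))$.
   Context: $\Pi_2\colon\Sigma_N\times I\to I$ is the projection onto the second coordinate. For $k\le m$ write $f_{\xi_k\ldots\xi_m}:=f_{\xi_m}\circ\cdots\circ f_{\xi_k}$. On $\Lambda$ the map $F$ is invertible, with $F^{-1}(\xi,p)=(\sigma^{-1}(\xi),f_{\xi_{-1}}^{-1}(p))$. A set $H\subset\Lambda$ is hyperbolic with fiber contraction if there are $c>0$ and $0<\lambda<1$ with $|(f_{\xi_0\ldots\xi_{n-1}})'(p)|\le c\lambda^n$ for all $n\ge1$ and all $(\xi,p)\in H$. It is hyperbolic with fiber expansion if it is hyperbolic with fiber contraction with respect to $F^{-1}$, i.e. the analogous bound holds for the derivatives of the fiber components of $F^{-n}$ restricted to $\Lambda$. $H$ is hyperbolic if it is hyperbolic with fiber contraction or with fiber expansion. *)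

From Stdlib Require Import Reals ZArith List.
Open Scope R_scope.

Definition I (x : R) : Prop := 0 <= x <= 1.

(** Symbol sequences: Sigma_N = {0,...,N-1}^Z (alphabet relabelled from {1..N}). *)
Definition seqZ := Z -> nat.
Definition SigmaN (N : nat) (xi : seqZ) : Prop := forall k : Z, (xi k < N)%nat.

Definition shift (xi : seqZ) : seqZ := fun k => xi (k + 1)%Z.
Definition shift_inv (xi : seqZ) : seqZ := fun k => xi (k - 1)%Z.
Definition shift_invn (n : nat) (xi : seqZ) : seqZ := fun k => xi (k - Z.of_nat n)%Z.

Definition deriv_within (D : R -> Prop) (g : R -> R) (x l : R) : Prop :=
  forall eps, 0 < eps -> exists delta, 0 < delta /\
    forall y, D y -> y <> x -> Rabs (y - x) < delta ->
      Rabs ((g y - g x) / (y - x) - l) < eps.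

Definition continuous_within (D : R -> Prop) (h : R -> R) (x : R) : Prop :=
  forall eps, 0 < eps -> exists delta, 0 < delta /\
    forall y, D y -> Rabs (y - x) < delta -> Rabs (h y - h x) < eps.

Definition C1_on (D : R -> Prop) (h : R -> R) : Prop :=
  exists dh : R -> R,
    (forall x, D x -> deriv_within D h x (dh x)) /\
    (forall x, D x -> continuous_within D dh x).

Definition image (h : R -> R) (D : R -> Prop) (y : R) : Prop :=
  exists x, D x /\ h x = y.

Definition C1_diffeo_onto_image (h hinv : R -> R) : Prop :=
  (forall x, I x -> I (h x)) /\
  C1_on I h /\
  C1_on (image h I) hinv /\
  (forall x, I x -> hinv (h x) = x) /\
  (forall y, image h I y -> h (hinv y) = y).

Definition F (f : nat -> R -> R) (z : seqZ * R) : seqZ * R :=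
  (shift (fst z), f (fst z 0%Z) (snd z)).
Definition Fn (f : nat -> R -> R) (n : nat) (z : seqZ * R) : seqZ * R :=
  Nat.iter n (F f) z.

(** F^{-1}(xi,p) = (sigma^{-1} xi, f_{xi_{-1}}^{-1} p) (valid on Lambda), iterates. *)
Definition Finv (g : nat -> R -> R) (z : seqZ * R) : seqZ * R :=
  (shift_inv (fst z), g (fst z (-1)%Z) (snd z)).
Definition Finvn (g : nat -> R -> R) (n : nat) (z : seqZ * R) : seqZ * R :=
  Nat.iter n (Finv g) z.

Definition Lambda (N : nat) (f : nat -> R -> R) (z : seqZ * R) : Prop :=
  forall n : nat, exists y : seqZ * R,
    SigmaN N (fst y) /\ I (snd y) /\ Fn f n y = z.

Fixpoint fcomp (f : nat -> R -> R) (xi : seqZ) (n : nat) (p : R) : R :=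
  match n with
  | O => p
  | S m => f (xi (Z.of_nat m)) (fcomp f xi m p)
  end.

Definition F_invariant (f : nat -> R -> R) (H : seqZ * R -> Prop) : Prop :=
  (forall z, H z -> H (F f z)) /\
  (forall w, H w -> exists z, H z /\ F f z = w).

Definition hyp_contraction (f : nat -> R -> R) (H : seqZ * R -> Prop) : Prop :=
  exists c lam : R, 0 < c /\ 0 < lam < 1 /\
    forall (n : nat) (xi : seqZ) (p : R), (1 <= n)%nat -> H (xi, p) ->
      exists D, deriv_within I (fcomp f xi n) p D /\ Rabs D <= c * lam ^ n.

(** Hyperbolic with fibre expansion: fibre contraction for F^{-1}.  The fibre
    component of F^{-n} over xi is q |-> f_{xi_{-n}}^{-1} o ... o f_{xi_{-1}}^{-1} q,
    whose natural domain is f_{xi_{-n} ... xi_{-1}}(I). *)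
Definition hyp_expansion (f g : nat -> R -> R) (H : seqZ * R -> Prop) : Prop :=
  exists c lam : R, 0 < c /\ 0 < lam < 1 /\
    forall (n : nat) (xi : seqZ) (p : R), (1 <= n)%nat -> H (xi, p) ->
      exists D,
        deriv_within (image (fcomp f (shift_invn n xi) n) I)
                     (fun q => snd (Finvn g n (xi, q))) p D
        /\ Rabs D <= c * lam ^ n.

Definition hyperbolic (f g : nat -> R -> R) (H : seqZ * R -> Prop) : Prop :=
  hyp_contraction f H \/ hyp_expansion f g H.

Definition card_le (A : R -> Prop) (M : nat) : Prop :=
  forall l : list R, NoDup l -> (forall x, In x l -> A x) -> (length l <= M)%nat.

Definition fibre (H : seqZ * R -> Prop) (xi : seqZ) (p : R) : Prop :=
  H (xi, p) /\ I p.

From Pilot Require Import Defs.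
From Stdlib Require Import Reals ZArith List Lra Lia ClassicalEpsilon FunctionalExtensionality.
Open Scope R_scope.

(* Since only finitely many maps f_i occur, the fibre derivative of F^m is
   equicontinuous in the base point xi.  Hyperbolicity at a point of H then
   controls this derivative on a uniform neighbourhood, so a map T on H that
   preserves fibres (a chosen F^m-preimage under fibre contraction, F^m itself
   under fibre expansion) expands fibre distances below some scale delta by a
   factor 1/rho > 1.  Given distinct points of H_xi at mutual distance >= d,
   choose n with rho^n < d: their T^n-images, which again lie in a single
   fibre, are then pairwise at least 1/K apart, where 1/K < delta.  Hence
   #H_xi <= K + 1, with K depending only on delta. *)

(* Extending by clamping to I reduces calculus on I to calculus on R. *)

Definition clamp (x : R) : R := Rmax 0 (Rmin 1 x).

Lemma clamp_I x : I (clamp x).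
Proof. unfold clamp, I, Rmax, Rmin; repeat destruct Rle_dec; lra. Qed.

Lemma clamp_id x : I x -> clamp x = x.
Proof. unfold clamp, I, Rmax, Rmin; intros; repeat destruct Rle_dec; lra. Qed.

Lemma clamp_lipschitz x y : Rabs (clamp y - clamp x) <= Rabs (y - x).
Proof. unfold clamp, Rmax, Rmin; repeat destruct Rle_dec; split_Rabs; lra. Qed.

Lemma continuity_clamp_ext h :
  (forall x, I x -> continuous_within I h x) -> continuity (fun t => h (clamp t)).
Proof.
  intros Hc x eps Heps.
  destruct (Hc (clamp x) (clamp_I x) eps Heps) as [d [Hd Hclose]].
  exists d; split; [lra|].
  intros y [_ Hy]; simpl in *; unfold R_dist in *.
  apply Hclose; [apply clamp_I|].
  pose proof (clamp_lipschitz x y); lra.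
Qed.

Lemma derivable_pt_lim_clamp_ext h c l :
  0 < c < 1 -> deriv_within I h c l -> derivable_pt_lim (fun t => h (clamp t)) c l.
Proof.
  intros Hc Hd eps Heps.
  destruct (Hd eps Heps) as [d [Hdpos Hquot]].
  assert (Hm : 0 < Rmin d (Rmin c (1 - c))) by (repeat apply Rmin_glb_lt; lra).
  exists (mkposreal _ Hm); simpl; intros k Hk Hkd.
  pose proof (Rmin_l d (Rmin c (1 - c))).
  pose proof (Rmin_r d (Rmin c (1 - c))).
  pose proof (Rmin_l c (1 - c)). pose proof (Rmin_r c (1 - c)).
  assert (HI : I (c + k)) by (unfold I; split_Rabs; lra).
  rewrite (clamp_id (c + k) HI), (clamp_id c) by (unfold I; lra).
  replace k with ((c + k) - c) at 2 by ring.
  apply Hquot; auto; [lra|].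
  replace (c + k - c) with k by ring; lra.
Qed.

Lemma deriv_within_continuous A h x l :
  deriv_within A h x l -> continuous_within A h x.
Proof.
  intros Hd eps Heps.
  destruct (Hd 1 Rlt_0_1) as [d1 [Hd1 Hquot]].
  pose proof (Rabs_pos l).
  assert (Hp : 0 < eps / (Rabs l + 1)) by (apply Rdiv_lt_0_compat; lra).
  exists (Rmin d1 (eps / (Rabs l + 1))); split; [apply Rmin_glb_lt; lra|].
  intros y Ay Hy.
  pose proof (Rmin_l d1 (eps / (Rabs l + 1))).
  pose proof (Rmin_r d1 (eps / (Rabs l + 1))).
  destruct (Req_dec y x) as [->|Hne]; [rewrite Rminus_diag, Rabs_R0; lra|].
  specialize (Hquot y Ay Hne ltac:(lra)).
  set (q := (h y - h x) / (y - x)) in Hquot.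
  assert (Hq : Rabs q <= Rabs l + 1) by (pose proof (Rabs_triang_inv q l); lra).
  replace (h y - h x) with (q * (y - x)) by (unfold q; field; lra).
  rewrite Rabs_mult.
  apply Rle_lt_trans with ((Rabs l + 1) * Rabs (y - x));
    [apply Rmult_le_compat_r; [apply Rabs_pos | exact Hq]|].
  apply Rlt_le_trans with ((Rabs l + 1) * (eps / (Rabs l + 1)));
    [apply Rmult_lt_compat_l; lra | right; field; lra].
Qed.

Lemma deriv_within_ext A h1 h2 x l :
  (forall t, A t -> h1 t = h2 t) -> A x ->
  deriv_within A h1 x l -> deriv_within A h2 x l.
Proof.
  intros He Ax Hd eps Heps; destruct (Hd eps Heps) as [d [Hdpos Hquot]].
  exists d; split; auto; intros y Ay Hyx Hy.
  rewrite <- (He y Ay), <- (He x Ax); auto.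
Qed.

Lemma deriv_within_id A x : deriv_within A (fun t => t) x 1.
Proof.
  intros eps Heps; exists 1; split; [lra|]; intros y _ Hyx _.
  replace ((y - x) / (y - x) - 1) with 0 by (field; lra).
  rewrite Rabs_R0; lra.
Qed.

Lemma deriv_within_comp A B h k x a b :
  deriv_within A h x a -> deriv_within B k (h x) b -> (forall t, A t -> B (h t)) ->
  deriv_within A (fun t => k (h t)) x (b * a).
Proof.
  intros Hh Hk HAB eps Heps.
  pose proof (Rabs_pos a) as Ha; pose proof (Rabs_pos b) as Hb.
  set (ek := eps / (2 * (Rabs a + 1))).
  set (eh := Rmin 1 (eps / (2 * (Rabs b + 1)))).
  assert (Hek : ek * (Rabs a + 1) = eps / 2) by (unfold ek; field; lra).
  assert (Hek0 : 0 < ek) by (unfold ek; apply Rdiv_lt_0_compat; lra).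
  assert (Heh1 : eh <= 1) by apply Rmin_l.
  assert (Heh0 : 0 < eh) by (apply Rmin_glb_lt; [lra | apply Rdiv_lt_0_compat; lra]).
  assert (Heh : Rabs b * eh < eps / 2).
  { apply Rle_lt_trans with (Rabs b * (eps / (2 * (Rabs b + 1))));
      [apply Rmult_le_compat_l; [lra | apply Rmin_r]|].
    apply Rmult_lt_reg_r with (2 * (Rabs b + 1)); [lra|].
    replace (Rabs b * (eps / (2 * (Rabs b + 1))) * (2 * (Rabs b + 1)))
      with (Rabs b * eps) by (field; lra).
    lra. }
  destruct (Hk ek Hek0) as [dk [Hdk Hkquot]].
  destruct (deriv_within_continuous _ _ _ _ Hh dk Hdk) as [dc [Hdc Hhcont]].
  destruct (Hh eh Heh0) as [dh [Hdh Hhquot]].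
  exists (Rmin dc dh); split; [apply Rmin_glb_lt; lra|].
  intros t At Htx Ht.
  pose proof (Rmin_l dc dh); pose proof (Rmin_r dc dh).
  specialize (Hhquot t At Htx ltac:(lra)); specialize (Hhcont t At ltac:(lra)).
  set (q := (h t - h x) / (t - x)) in Hhquot.
  assert (Hq : Rabs q <= Rabs a + 1).
  { pose proof (Rabs_triang_inv q a); lra. }
  assert (Hbq : Rabs b * Rabs (q - a) <= Rabs b * eh) by (apply Rmult_le_compat_l; lra).
  destruct (Req_dec (h t) (h x)) as [Heq|Hne].
  - assert (Hq0 : q = 0) by (unfold q; rewrite Heq; field; lra).
    replace ((k (h t) - k (h x)) / (t - x) - b * a) with (b * (q - a))
      by (rewrite Heq, Hq0; field; lra).
    rewrite Rabs_mult; lra.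
  - specialize (Hkquot (h t) (HAB t At) Hne Hhcont).
    set (r := (k (h t) - k (h x)) / (h t - h x)) in Hkquot.
    replace ((k (h t) - k (h x)) / (t - x) - b * a) with ((r - b) * q + b * (q - a))
      by (unfold r, q; field; split; lra).
    eapply Rle_lt_trans; [apply Rabs_triang|]; rewrite !Rabs_mult.
    assert (Rabs (r - b) * Rabs q <= ek * (Rabs a + 1))
      by (apply Rmult_le_compat; try apply Rabs_pos; lra).
    lra.
Qed.

Lemma deriv_within_I_unique h x a b :
  I x -> deriv_within I h x a -> deriv_within I h x b -> a = b.
Proof.
  intros Hx Ha Hb.
  destruct (Req_dec a b) as [|Hne]; auto; exfalso.
  assert (He : 0 < Rabs (a - b) / 2)
    by (apply Rdiv_lt_0_compat; [apply Rabs_pos_lt; lra | lra]).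
  destruct (Ha _ He) as [d1 [Hd1 Hqa]], (Hb _ He) as [d2 [Hd2 Hqb]].
  set (s := Rmin (Rmin d1 d2) (1 / 2) / 2).
  pose proof (Rmin_l (Rmin d1 d2) (1 / 2)); pose proof (Rmin_r (Rmin d1 d2) (1 / 2)).
  pose proof (Rmin_l d1 d2); pose proof (Rmin_r d1 d2).
  assert (Hs : 0 < s) by (unfold s; apply Rdiv_lt_0_compat; [repeat apply Rmin_glb_lt | ]; lra).
  assert (exists y, I y /\ y <> x /\ Rabs (y - x) = s) as [y [Hy [Hyx Hys]]].
  { unfold I in Hx; destruct (Rle_dec x (1 / 2)).
    - exists (x + s); split; [unfold I, s in *; lra|]; split; [lra|].
      replace (x + s - x) with s by ring; apply Rabs_right; lra.
    - exists (x - s); split; [unfold I, s in *; lra|]; split; [lra|].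
      replace (x - s - x) with (- s) by ring; rewrite Rabs_Ropp; apply Rabs_right; lra. }
  specialize (Hqa y Hy Hyx ltac:(unfold s in *; lra)).
  specialize (Hqb y Hy Hyx ltac:(unfold s in *; lra)).
  set (q := (h y - h x) / (y - x)) in *.
  assert (Rabs (a - b) <= Rabs (q - b) + Rabs (q - a)).
  { replace (a - b) with ((q - b) - (q - a)) by ring.
    eapply Rle_trans; [apply Rabs_triang|]; rewrite Rabs_Ropp; lra. }
  lra.
Qed.

Lemma deriv_within_left_inverse h P x a b :
  I x -> deriv_within I h x a -> deriv_within (image h I) P (h x) b ->
  (forall t, I t -> P (h t) = t) -> b * a = 1.
Proof.
  intros Hx Ha Hb HPh.
  pose proof (deriv_within_comp I (image h I) h P x a b Ha Hb
    (fun t Ht => ex_intro _ t (conj Ht eq_refl))) as Hcomp.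
  apply (deriv_within_ext _ _ (fun t => t)) in Hcomp; [|exact HPh | exact Hx].
  exact (deriv_within_I_unique _ _ _ _ Hx Hcomp (deriv_within_id I x)).
Qed.

Lemma MVT_I h dh : (forall t, I t -> deriv_within I h t (dh t)) ->
  forall x y, I x -> I y ->
  exists c, I c /\ Rmin x y <= c <= Rmax x y /\ h y - h x = dh c * (y - x).
Proof.
  intros Hd.
  assert (Hcont : continuity (fun t => h (clamp t))).
  { apply continuity_clamp_ext; intros x Hx; eapply deriv_within_continuous; eauto. }
  assert (Hlt : forall x y, I x -> I y -> x < y ->
            exists c, x < c < y /\ h y - h x = dh c * (y - x)).
  { intros x y Hx Hy Hxy.
    assert (Hlim : forall c, x < c < y -> derivable_pt_lim (fun t => h (clamp t)) c (dh c)).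
    { intros c Hc; apply derivable_pt_lim_clamp_ext; [unfold I in *; lra|].
      apply Hd; unfold I in *; lra. }
    assert (pr1 : forall c, x < c < y -> derivable_pt (fun t => h (clamp t)) c)
      by (intros c Hc; exists (dh c); exact (Hlim c Hc)).
    assert (pr2 : forall c, x < c < y -> derivable_pt id c)
      by (intros c _; apply derivable_pt_id).
    destruct (MVT _ id x y pr1 pr2 Hxy) as [c [P HP]];
      [intros c _; apply Hcont | intros c _; apply derivable_continuous_pt, derivable_pt_id|].
    exists c; split; [exact P|].
    rewrite (derive_pt_eq_0 _ c (dh c) (pr1 c P) (Hlim c P)) in HP.
    rewrite (derive_pt_eq_0 id c 1 (pr2 c P) (derivable_pt_lim_id c)) in HP.
    unfold id in HP; rewrite !clamp_id in HP by assumption; lra. }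
  intros x y Hx Hy.
  destruct (Rtotal_order x y) as [Hxy|[<-|Hxy]].
  - destruct (Hlt x y Hx Hy Hxy) as [c [Hc Hc']]; exists c.
    rewrite Rmin_left, Rmax_right by lra; unfold I in *; repeat split; lra.
  - exists x; rewrite Rmin_left, Rmax_right by lra; split; [auto | split; [lra | ring]].
  - destruct (Hlt y x Hy Hx Hxy) as [c [Hc Hc']]; exists c.
    rewrite Rmin_right, Rmax_left by lra; unfold I in *; repeat split; lra.
Qed.

Lemma IVT_I h : (forall t, I t -> continuous_within I h t) ->
  forall a b v, I a -> I b -> a <= b -> (h a - v) * (h b - v) <= 0 ->
  exists t, a <= t <= b /\ h t = v.
Proof.
  intros Hc a b v Ha Hb Hab Hv.
  assert (Hk : continuity (fun t => h (clamp t) - v))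
    by (apply continuity_minus; [apply continuity_clamp_ext; auto | apply continuity_const; intros ? ?; auto]).
  destruct (IVT_cor _ a b Hk Hab) as [t [Ht Ht']]; [rewrite !clamp_id by auto; exact Hv|].
  exists t; split; auto.
  rewrite clamp_id in Ht' by (unfold I in *; lra); lra.
Qed.

Lemma uniform_continuity_I h : (forall t, I t -> continuous_within I h t) ->
  forall eps, 0 < eps -> exists d, 0 < d /\
    forall x y, I x -> I y -> Rabs (x - y) < d -> Rabs (h x - h y) < eps.
Proof.
  intros Hc eps Heps.
  destruct (Heine_cor2 (f := fun t => h (clamp t)) (a := 0) (b := 1)
             (fun x _ => continuity_clamp_ext h Hc x) (mkposreal eps Heps)) as [d Hd].
  exists d; split; [apply cond_pos|].
  intros x y Hx Hy Hxy; specialize (Hd x y Hx Hy Hxy); simpl in Hd.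
  rewrite !clamp_id in Hd by auto; exact Hd.
Qed.

Lemma bounded_continuous_I h : (forall t, I t -> continuous_within I h t) ->
  exists B, forall x, I x -> Rabs (h x) <= B.
Proof.
  intros Hc.
  assert (Habs : forall t, I t -> continuous_within I (fun x => Rabs (h x)) t).
  { intros t Ht eps Heps; destruct (Hc t Ht eps Heps) as [d [Hd Hclose]].
    exists d; split; auto; intros y Hy Hyd.
    eapply Rle_lt_trans; [apply Rabs_triang_inv2 | exact (Hclose y Hy Hyd)]. }
  destruct (continuity_ab_maj (fun t => Rabs (h (clamp t))) 0 1 ltac:(lra)
              (fun c _ => continuity_clamp_ext _ Habs c)) as [M [HM _]].
  exists (Rabs (h (clamp M))); intros x Hx.
  specialize (HM x Hx); simpl in HM; rewrite clamp_id in HM by auto; exact HM.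
Qed.

Lemma between_abs p q c : Rmin p q <= c <= Rmax p q -> Rabs (c - p) <= Rabs (q - p).
Proof. unfold Rmin, Rmax; destruct Rle_dec; intros; split_Rabs; lra. Qed.

Lemma injective_continuous_between h :
  (forall t, I t -> continuous_within I h t) ->
  (forall x y, I x -> I y -> h x = h y -> x = y) ->
  forall a b z, I a -> I b -> a <= z <= b -> (h z - h a) * (h z - h b) <= 0.
Proof.
  intros Hc Hinj a b z Ia Ib Hz.
  assert (Iz : I z) by (unfold I in *; lra).
  destruct (Rle_dec ((h z - h a) * (h z - h b)) 0) as [|Hpos]; auto; exfalso.
  (* h z lies outside [h a, h b], so one endpoint value is taken again between z and the other *)
  destruct (Rle_dec ((h a - h b) * (h z - h b)) 0) as [Hb|Ha].
  - destruct (IVT_I h Hc a z (h b) Ia Iz ltac:(lra) ltac:(nra)) as [t [Ht Htb]].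
    assert (t = b) by (apply Hinj; auto; unfold I in *; lra).
    assert (z = b) by lra; subst z; nra.
  - destruct (IVT_I h Hc z b (h a) Iz Ib ltac:(lra) ltac:(nra)) as [t [Ht Hta]].
    assert (t = a) by (apply Hinj; auto; unfold I in *; lra).
    assert (z = a) by lra; subst z; nra.
Qed.

Lemma contraction_near h dh p1 r k :
  (forall t, I t -> deriv_within I h t (dh t)) -> I p1 ->
  (forall t, I t -> Rabs (t - p1) <= r -> Rabs (dh t) <= k) ->
  forall p2, I p2 -> Rabs (p2 - p1) <= r -> Rabs (h p2 - h p1) <= k * Rabs (p2 - p1).
Proof.
  intros Hd Ip1 Hsmall p2 Ip2 Hp2.
  destruct (MVT_I h dh Hd p1 p2 Ip1 Ip2) as [c [Ic [Hc Hmvt]]].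
  pose proof (between_abs _ _ _ Hc).
  rewrite Hmvt, Rabs_mult.
  apply Rmult_le_compat_r; [apply Rabs_pos | apply Hsmall; auto; lra].
Qed.

Lemma expansion_near h dh p1 r k :
  (forall t, I t -> deriv_within I h t (dh t)) ->
  (forall x y, I x -> I y -> h x = h y -> x = y) -> I p1 -> 0 < r ->
  (forall t, I t -> Rabs (t - p1) <= r -> k <= Rabs (dh t)) ->
  forall p2, I p2 -> Rabs (h p2 - h p1) < k * r -> k * Rabs (p2 - p1) <= Rabs (h p2 - h p1).
Proof.
  intros Hd Hinj Ip1 Hr Hlarge p2 Ip2 Hclose.
  assert (Hc : forall t, I t -> continuous_within I h t)
    by (intros t It; eapply deriv_within_continuous; apply Hd, It).
  assert (Hmvt : forall q, I q -> Rabs (q - p1) <= r -> k * Rabs (q - p1) <= Rabs (h q - h p1)).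
  { intros q Iq Hq.
    destruct (MVT_I h dh Hd p1 q Ip1 Iq) as [c [Ic [Hcq Heq]]].
    pose proof (between_abs _ _ _ Hcq).
    rewrite Heq, Rabs_mult.
    apply Rmult_le_compat_r; [apply Rabs_pos | apply Hlarge; auto; lra]. }
  apply Hmvt; auto.
  destruct (Rle_dec (Rabs (p2 - p1)) r) as [|Hfar]; auto; exfalso.
  (* the point z at distance r from p1 towards p2 is already mapped at distance >= k r *)
  set (z := if Rle_dec p1 p2 then p1 + r else p1 - r).
  assert (Hz : Rmin p1 p2 <= z <= Rmax p1 p2 /\ Rabs (z - p1) = r).
  { unfold z, Rmin, Rmax; destruct (Rle_dec p1 p2); split_Rabs; lra. }
  destruct Hz as [Hzb Hzr].
  assert (Iz : I z) by (unfold I, Rmin, Rmax in *; destruct Rle_dec; lra).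
  assert (Hbetw : (h z - h p1) * (h z - h p2) <= 0).
  { unfold Rmin, Rmax in Hzb; destruct (Rle_dec p1 p2).
    - apply (injective_continuous_between h Hc Hinj); auto.
    - rewrite Rmult_comm; apply (injective_continuous_between h Hc Hinj); auto; lra. }
  specialize (Hmvt z Iz ltac:(lra)); rewrite Hzr in Hmvt.
  assert (Rabs (h z - h p1) <= Rabs (h p2 - h p1)) by (split_Rabs; nra).
  lra.
Qed.

Definition equicontinuous_on_I {A : Type} (S : A -> Prop) (h : A -> R -> R) : Prop :=
  forall eps, 0 < eps -> exists d, 0 < d /\
    forall a x y, S a -> I x -> I y -> Rabs (x - y) < d -> Rabs (h a x - h a y) < eps.

Definition bounded_on_I {A : Type} (S : A -> Prop) (h : A -> R -> R) : Prop :=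
  exists B, 0 <= B /\ forall a x, S a -> I x -> Rabs (h a x) <= B.

Lemma equicontinuous_finite (N : nat) (h : nat -> R -> R) :
  (forall i t, (i < N)%nat -> I t -> continuous_within I (h i) t) ->
  equicontinuous_on_I (fun i => (i < N)%nat) h.
Proof.
  induction N as [|N IH]; intros Hc eps Heps.
  - exists 1; split; [lra|]; intros; lia.
  - destruct (IH (fun i t Hi => Hc i t ltac:(lia)) eps Heps) as [d [Hd Hlow]].
    destruct (uniform_continuity_I (h N) (fun t => Hc N t ltac:(lia)) eps Heps) as [e [He HN]].
    exists (Rmin d e); split; [apply Rmin_glb_lt; auto|].
    intros i x y Hi Ix Iy Hxy.
    pose proof (Rmin_l d e); pose proof (Rmin_r d e).
    destruct (Nat.eq_dec i N) as [->|Hne]; [apply HN | apply Hlow]; auto; [lra | lia | lra].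
Qed.

Lemma bounded_finite (N : nat) (h : nat -> R -> R) :
  (forall i t, (i < N)%nat -> I t -> continuous_within I (h i) t) ->
  bounded_on_I (fun i => (i < N)%nat) h.
Proof.
  induction N as [|N IH]; intros Hc.
  - exists 0; split; [lra|]; intros; lia.
  - destruct (IH (fun i t Hi => Hc i t ltac:(lia))) as [B [HB Hlow]].
    destruct (bounded_continuous_I (h N) (fun t => Hc N t ltac:(lia))) as [C HN].
    exists (Rmax B C); split; [eapply Rle_trans; [exact HB | apply Rmax_l]|].
    intros i x Hi Ix.
    pose proof (Rmax_l B C); pose proof (Rmax_r B C).
    destruct (Nat.eq_dec i N) as [->|Hne].
    + specialize (HN x Ix); lra.
    + specialize (Hlow i x ltac:(lia) Ix); lra.
Qed.

Lemma equicontinuous_of_deriv_bounded {A : Type} (S : A -> Prop) (h dh : A -> R -> R) :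
  (forall a x, S a -> I x -> deriv_within I (h a) x (dh a x)) ->
  bounded_on_I S dh -> equicontinuous_on_I S h.
Proof.
  intros Hd [C [HC Hbound]] eps Heps.
  exists (eps / (C + 1)); split; [apply Rdiv_lt_0_compat; lra|].
  intros a x y Ha Ix Iy Hxy.
  destruct (MVT_I (h a) (dh a) (fun t It => Hd a t Ha It) y x Iy Ix) as [c [Ic [_ Hmvt]]].
  rewrite Hmvt, Rabs_mult.
  apply Rle_lt_trans with (C * Rabs (x - y));
    [apply Rmult_le_compat_r; [apply Rabs_pos | auto]|].
  apply Rle_lt_trans with ((C + 1) * Rabs (x - y)); [pose proof (Rabs_pos (x - y)); nra|].
  apply Rlt_le_trans with ((C + 1) * (eps / (C + 1)));
    [apply Rmult_lt_compat_l; lra | right; field; lra].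
Qed.

Lemma equicontinuous_comp {A B : Type} (S : A -> Prop) (S' : B -> Prop)
  (sel : A -> B) (h : B -> R -> R) (k : A -> R -> R) :
  (forall a, S a -> S' (sel a)) -> (forall a x, S a -> I x -> I (k a x)) ->
  equicontinuous_on_I S' h -> equicontinuous_on_I S k ->
  equicontinuous_on_I S (fun a x => h (sel a) (k a x)).
Proof.
  intros Hsel HkI Hh Hk eps Heps.
  destruct (Hh eps Heps) as [d [Hd Hhd]].
  destruct (Hk d Hd) as [e [He Hke]].
  exists e; split; [exact He|]; intros a x y Ha Ix Iy Hxy.
  apply Hhd; auto.
Qed.

Lemma bounded_comp {A B : Type} (S : A -> Prop) (S' : B -> Prop)
  (sel : A -> B) (h : B -> R -> R) (k : A -> R -> R) :
  (forall a, S a -> S' (sel a)) -> (forall a x, S a -> I x -> I (k a x)) ->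
  bounded_on_I S' h -> bounded_on_I S (fun a x => h (sel a) (k a x)).
Proof.
  intros Hsel HkI [C [HC Hbound]]; exists C; split; [exact HC|].
  intros a x Ha Ix; apply Hbound; auto.
Qed.

Lemma bounded_mul {A : Type} (S : A -> Prop) (h k : A -> R -> R) :
  bounded_on_I S h -> bounded_on_I S k -> bounded_on_I S (fun a x => h a x * k a x).
Proof.
  intros [Bh [HBh Hh]] [Bk [HBk Hk]].
  exists (Bh * Bk); split; [apply Rmult_le_pos; auto|].
  intros a x Ha Ix; rewrite Rabs_mult.
  apply Rmult_le_compat; try apply Rabs_pos; auto.
Qed.

Lemma equicontinuous_mul {A : Type} (S : A -> Prop) (h k : A -> R -> R) :
  bounded_on_I S h -> bounded_on_I S k ->
  equicontinuous_on_I S h -> equicontinuous_on_I S k ->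
  equicontinuous_on_I S (fun a x => h a x * k a x).
Proof.
  intros [Bh [HBh Hbh]] [Bk [HBk Hbk]] Hh Hk eps Heps.
  set (eh := eps / (2 * (Bk + 1))); set (ek := eps / (2 * (Bh + 1))).
  assert (Heh : eh * Bk < eps / 2).
  { unfold eh; apply Rmult_lt_reg_r with (2 * (Bk + 1)); [lra|].
    replace (eps / (2 * (Bk + 1)) * Bk * (2 * (Bk + 1))) with (eps * Bk) by (field; lra).
    lra. }
  assert (Hek : Bh * ek < eps / 2).
  { unfold ek; apply Rmult_lt_reg_r with (2 * (Bh + 1)); [lra|].
    replace (Bh * (eps / (2 * (Bh + 1))) * (2 * (Bh + 1))) with (eps * Bh) by (field; lra).
    lra. }
  destruct (Hh eh ltac:(unfold eh; apply Rdiv_lt_0_compat; lra)) as [dh [Hdh Hhd]].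
  destruct (Hk ek ltac:(unfold ek; apply Rdiv_lt_0_compat; lra)) as [dk [Hdk Hkd]].
  exists (Rmin dh dk); split; [apply Rmin_glb_lt; auto|].
  intros a x y Ha Ix Iy Hxy.
  pose proof (Rmin_l dh dk); pose proof (Rmin_r dh dk).
  specialize (Hhd a x y Ha Ix Iy ltac:(lra)); specialize (Hkd a x y Ha Ix Iy ltac:(lra)).
  replace (h a x * k a x - h a y * k a y)
    with ((h a x - h a y) * k a x + h a y * (k a x - k a y)) by ring.
  eapply Rle_lt_trans; [apply Rabs_triang|]; rewrite !Rabs_mult.
  assert (Rabs (h a x - h a y) * Rabs (k a x) <= eh * Bk)
    by (apply Rmult_le_compat; try apply Rabs_pos; try lra; auto).
  assert (Rabs (h a y) * Rabs (k a x - k a y) <= Bh * ek)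
    by (apply Rmult_le_compat; try apply Rabs_pos; try lra; auto).
  lra.
Qed.

Lemma pow_le_1_of_le_1 r n : 0 <= r <= 1 -> r ^ n <= 1.
Proof.
  intros Hr; induction n as [|n IH]; simpl; [lra|].
  pose proof (pow_le r n ltac:(lra)).
  apply Rle_trans with (1 * r ^ n); [apply Rmult_le_compat_r|]; lra.
Qed.

Lemma exists_pow_small c lam : 0 < c -> 0 < lam < 1 ->
  exists m, (1 <= m)%nat /\ c * lam ^ m <= 1 / 2.
Proof.
  intros Hc Hlam.
  destruct (pow_lt_1_zero lam ltac:(rewrite Rabs_right; lra) (/ (2 * c))) as [n Hn];
    [apply Rinv_0_lt_compat; lra|].
  exists (S n); split; [lia|].
  specialize (Hn (S n) ltac:(lia)).
  rewrite Rabs_right in Hn by (apply Rle_ge, pow_le; lra).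
  apply (Rmult_lt_compat_l c) in Hn; [|lra].
  replace (c * / (2 * c)) with (1 / 2) in Hn by (field; lra); lra.
Qed.

Lemma not_In_min_dist (x : R) (l : list R) : ~ In x l ->
  exists e, 0 < e /\ forall y, In y l -> e <= Rabs (x - y).
Proof.
  induction l as [|a l IH]; intros Hn.
  - exists 1; split; [lra | intros y []].
  - destruct IH as [e [He Hfar]]; [intro; apply Hn; right; auto|].
    assert (Hxa : 0 < Rabs (x - a)) by (apply Rabs_pos_lt; intro; apply Hn; left; lra).
    exists (Rmin e (Rabs (x - a))); split; [apply Rmin_glb_lt; auto|].
    intros y [<-|Hy]; [apply Rmin_r | eapply Rle_trans; [apply Rmin_l | auto]].
Qed.

Lemma NoDup_min_dist (l : list R) : NoDup l ->
  exists d, 0 < d /\ forall x y, In x l -> In y l -> x <> y -> d <= Rabs (x - y).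
Proof.
  induction l as [|a l IH]; intros Hnd.
  - exists 1; split; [lra | intros x y []].
  - apply NoDup_cons_iff in Hnd as [Hna Hnd].
    destruct (IH Hnd) as [d [Hd Hsep]], (not_In_min_dist a l Hna) as [e [He Hfar]].
    exists (Rmin d e); split; [apply Rmin_glb_lt; auto|].
    pose proof (Rmin_l d e); pose proof (Rmin_r d e).
    intros x y [<-|Hx] [<-|Hy] Hxy.
    + congruence.
    + specialize (Hfar y Hy); lra.
    + specialize (Hfar x Hx); rewrite Rabs_minus_sym in Hfar; lra.
    + specialize (Hsep x y Hx Hy Hxy); lra.
Qed.

Lemma Int_part_eq_close u v : Int_part u = Int_part v -> Rabs (u - v) < 1.
Proof.
  intros E.
  destruct (base_Int_part u) as [Hu1 Hu2], (base_Int_part v) as [Hv1 Hv2].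
  rewrite E in Hu1, Hu2; split_Rabs; lra.
Qed.

Lemma Int_part_nonneg u : 0 <= u -> (0 <= Int_part u)%Z.
Proof.
  intros Hu; destruct (base_Int_part u) as [_ Hlow].
  assert (-1 < Int_part u)%Z by (apply lt_IZR; simpl; lra); lia.
Qed.

Lemma length_le_of_separated_image (K : nat) (a : R -> R) (l : list R) :
  (0 < K)%nat -> NoDup l -> (forall x, In x l -> I (a x)) ->
  (forall x y, In x l -> In y l -> x <> y -> / INR K <= Rabs (a x - a y)) ->
  (length l <= S K)%nat.
Proof.
  intros HK Hnd HI Hsep.
  assert (HKpos : 0 < INR K) by (apply lt_0_INR; lia).
  (* cells of width 1/K; distinct points of l land in distinct cells *)
  set (cell := fun x => Z.to_nat (Int_part (a x * INR K))).
  assert (Hcell_nonneg : forall x, In x l -> (0 <= Int_part (a x * INR K))%Z).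
  { intros x Hx; apply Int_part_nonneg; specialize (HI x Hx); unfold I in HI; nra. }
  assert (Hinj : ForallPairs (fun x y => cell x = cell y -> x = y) l).
  { intros x y Hx Hy Hxy.
    destruct (Req_dec x y) as [|Hne]; auto; exfalso.
    apply Z2Nat.inj in Hxy; auto.
    apply Int_part_eq_close in Hxy.
    rewrite <- Rmult_minus_distr_r, Rabs_mult, (Rabs_right (INR K)) in Hxy by lra.
    specialize (Hsep x y Hx Hy Hne).
    apply (Rmult_le_compat_r (INR K)) in Hsep; [|lra].
    rewrite Rinv_l in Hsep by lra; lra. }
  assert (Hrange : incl (map cell l) (seq 0 (S K))).
  { intros b Hb; apply in_map_iff in Hb as [x [<- Hx]]; apply in_seq.
    specialize (HI x Hx); unfold I in HI.
    destruct (base_Int_part (a x * INR K)) as [Hle _].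
    assert (Hcell : IZR (Int_part (a x * INR K)) <= IZR (Z.of_nat K))
      by (rewrite <- INR_IZR_INZ; nra).
    apply le_IZR in Hcell; specialize (Hcell_nonneg x Hx); unfold cell; lia. }
  pose proof (NoDup_incl_length (NoDup_map_NoDup_ForallPairs cell Hinj Hnd) Hrange) as Hlen.
  rewrite length_map, length_seq in Hlen; exact Hlen.
Qed.

Section FibreCounting.
Variable H : seqZ * R -> Prop.
Variable T : seqZ * R -> seqZ * R.
Variables delta rho : R.
Hypothesis delta_pos : 0 < delta.
Hypothesis rho_range : 0 <= rho < 1.
Hypothesis H_I : forall z, H z -> I (snd z).
Hypothesis H_T : forall z, H z -> H (T z).
Hypothesis T_fibre : forall z1 z2, H z1 -> H z2 -> fst z1 = fst z2 -> fst (T z1) = fst (T z2).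
Hypothesis T_expanding : forall z1 z2, H z1 -> H z2 -> fst z1 = fst z2 ->
  Rabs (snd (T z1) - snd (T z2)) < delta ->
  Rabs (snd z1 - snd z2) <= rho * Rabs (snd (T z1) - snd (T z2)).

Lemma iter_T_H n z : H z -> H (Nat.iter n T z).
Proof. intros Hz; induction n as [|n IH]; simpl; auto. Qed.

Lemma iter_T_expanding n z1 z2 : H z1 -> H z2 -> fst z1 = fst z2 ->
  Rabs (snd (Nat.iter n T z1) - snd (Nat.iter n T z2)) < delta ->
  Rabs (snd z1 - snd z2) <= rho ^ n * Rabs (snd (Nat.iter n T z1) - snd (Nat.iter n T z2)).
Proof.
  revert z1 z2; induction n as [|n IH]; intros z1 z2 Hz1 Hz2 E D; [simpl; lra|].
  rewrite !Nat.iter_succ_r in *.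
  specialize (IH (T z1) (T z2) (H_T _ Hz1) (H_T _ Hz2) (T_fibre _ _ Hz1 Hz2 E) D).
  set (X := Rabs (snd (Nat.iter n T (T z1)) - snd (Nat.iter n T (T z2)))) in *.
  assert (Hpow : rho ^ n <= 1) by (apply pow_le_1_of_le_1; lra).
  assert (Hpow0 : 0 <= rho ^ n) by (apply pow_le; lra).
  assert (HX : 0 <= X) by apply Rabs_pos.
  assert (Hnear : Rabs (snd (T z1) - snd (T z2)) < delta) by nra.
  eapply Rle_trans; [exact (T_expanding _ _ Hz1 Hz2 E Hnear)|].
  simpl; rewrite Rmult_assoc; apply Rmult_le_compat_l; lra.
Qed.

Lemma fibre_card_bounded : exists M, (1 <= M)%nat /\ forall xi, card_le (fibre H xi) M.
Proof.
  destruct (archimed_cor1 delta delta_pos) as [K [HK HK0]].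
  exists (S K); split; [lia|].
  intros xi l Hnd Hl.
  destruct (NoDup_min_dist l Hnd) as [d [Hd Hsep]].
  destruct (pow_lt_1_zero rho ltac:(rewrite Rabs_right; lra) d Hd) as [n Hn].
  specialize (Hn n (le_n n)); rewrite Rabs_right in Hn by (apply Rle_ge, pow_le; lra).
  apply (length_le_of_separated_image K (fun x => snd (Nat.iter n T (xi, x)))); auto.
  - intros x Hx; apply H_I, iter_T_H, Hl, Hx.
  - (* points closer than 1/K after n steps were closer than rho^n < d before *)
    intros x y Hx Hy Hxy.
    destruct (Hl x Hx) as [Hx1 _], (Hl y Hy) as [Hy1 _].
    set (ax := snd (Nat.iter n T (xi, x))); set (ay := snd (Nat.iter n T (xi, y))).
    assert (Iax : I ax) by apply H_I, iter_T_H, Hx1.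
    assert (Iay : I ay) by apply H_I, iter_T_H, Hy1.
    destruct (Rle_dec (/ INR K) (Rabs (ax - ay))) as [|Hclose]; auto; exfalso.
    pose proof (iter_T_expanding n (xi, x) (xi, y) Hx1 Hy1 eq_refl ltac:(fold ax ay; lra))
      as Hcontr; fold ax ay in Hcontr; simpl in Hcontr.
    specialize (Hsep x y Hx Hy Hxy).
    assert (Rabs (ax - ay) <= 1) by (unfold I in *; split_Rabs; lra).
    assert (0 <= rho ^ n) by (apply pow_le; lra).
    nra.
Qed.
End FibreCounting.

Definition shiftn (n : nat) (xi : seqZ) : seqZ := fun k => xi (k + Z.of_nat n)%Z.

Lemma shiftn_inj n a b : shiftn n a = shiftn n b -> a = b.
Proof.
  intros E; apply functional_extensionality; intros k.
  pose proof (equal_f E (k - Z.of_nat n)%Z) as Ek; unfold shiftn in Ek.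
  replace (k - Z.of_nat n + Z.of_nat n)%Z with k in Ek by lia; exact Ek.
Qed.

Lemma shift_invn_shiftn n a : shift_invn n (shiftn n a) = a.
Proof.
  apply functional_extensionality; intros k; unfold shift_invn, shiftn; f_equal; lia.
Qed.

Lemma Fn_eq f n z : Fn f n z = (shiftn n (fst z), fcomp f (fst z) n (snd z)).
Proof.
  induction n as [|n IH].
  - destruct z as [a p]; simpl; f_equal.
    apply functional_extensionality; intros k; unfold shiftn; f_equal; lia.
  - change (Fn f (S n) z) with (F f (Fn f n z)); rewrite IH; unfold F; simpl; f_equal.
    apply functional_extensionality; intros k; unfold Defs.shift, shiftn; f_equal; lia.
Qed.

Section SkewProduct.
Variable N : nat.
Variables f df : nat -> R -> R.
Hypothesis f_I : forall i x, (i < N)%nat -> I x -> I (f i x).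
Hypothesis df_deriv : forall i x, (i < N)%nat -> I x -> deriv_within I (f i) x (df i x).
Hypothesis df_cont : forall i x, (i < N)%nat -> I x -> continuous_within I (df i) x.

Lemma fcomp_I xi n p : SigmaN N xi -> I p -> I (fcomp f xi n p).
Proof. intros Hxi Hp; induction n as [|n IH]; simpl; auto. Qed.

Fixpoint dfcomp (xi : seqZ) (n : nat) (p : R) : R :=
  match n with
  | O => 1
  | S m => df (xi (Z.of_nat m)) (fcomp f xi m p) * dfcomp xi m p
  end.

Lemma fcomp_deriv xi n p : SigmaN N xi -> I p -> deriv_within I (fcomp f xi n) p (dfcomp xi n p).
Proof.
  intros Hxi; revert p; induction n as [|n IH]; intros p Hp; simpl; [apply deriv_within_id|].
  apply (deriv_within_comp I I (fcomp f xi n));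
    [apply IH, Hp | apply df_deriv; [apply Hxi | apply fcomp_I; auto] |].
  intros t Ht; apply fcomp_I; auto.
Qed.

Lemma dfcomp_bounded n : bounded_on_I (SigmaN N) (fun xi => dfcomp xi n).
Proof.
  induction n as [|n IH].
  - exists 1; split; [lra|]; intros; simpl; rewrite Rabs_R1; lra.
  - apply (bounded_mul (SigmaN N) (fun xi p => df (xi (Z.of_nat n)) (fcomp f xi n p))); auto.
    apply (bounded_comp _ (fun i => (i < N)%nat));
      [intros xi Hxi; apply Hxi | intros; apply fcomp_I; auto | apply bounded_finite, df_cont].
Qed.

Lemma dfcomp_equicontinuous n : equicontinuous_on_I (SigmaN N) (fun xi => dfcomp xi n).
Proof.
  induction n as [|n IH].
  - intros eps Heps; exists 1; split; [lra|]; intros; simpl.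
    rewrite Rminus_diag, Rabs_R0; auto.
  - apply (equicontinuous_mul (SigmaN N) (fun xi p => df (xi (Z.of_nat n)) (fcomp f xi n p)));
      [| apply dfcomp_bounded | | exact IH].
    + apply (bounded_comp _ (fun i => (i < N)%nat));
        [intros xi Hxi; apply Hxi | intros; apply fcomp_I; auto | apply bounded_finite, df_cont].
    + apply (equicontinuous_comp _ (fun i => (i < N)%nat));
        [intros xi Hxi; apply Hxi | intros; apply fcomp_I; auto
        | apply equicontinuous_finite, df_cont |].
      apply (equicontinuous_of_deriv_bounded _ _ (fun xi => dfcomp xi n));
        [intros; apply fcomp_deriv; auto | apply dfcomp_bounded].
Qed.

Variable g : nat -> R -> R.
Hypothesis g_f : forall i x, (i < N)%nat -> I x -> g i (f i x) = x.
Variable H : seqZ * R -> Prop.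
Hypothesis H_Lambda : forall z, H z -> Lambda N f z.
Hypothesis H_invariant : F_invariant f H.

Lemma H_SigmaN_I z : H z -> SigmaN N (fst z) /\ I (snd z).
Proof.
  intros Hz; destruct (H_Lambda z Hz 0%nat) as [y [Hy1 [Hy2 Hyz]]].
  simpl in Hyz; subst; auto.
Qed.

Lemma H_Fn n z : H z -> H (Fn f n z).
Proof.
  intros Hz; induction n as [|n IH]; [exact Hz|].
  change (Fn f (S n) z) with (F f (Fn f n z)); apply (proj1 H_invariant), IH.
Qed.

Lemma H_Fn_preimage_map n : exists T, forall w, H w -> H (T w) /\ Fn f n (T w) = w.
Proof.
  assert (Hpre : forall w, H w -> exists z, H z /\ Fn f n z = w).
  { induction n as [|n IH]; intros w Hw; [exists w; auto|].
    destruct (proj2 H_invariant w Hw) as [y [Hy <-]], (IH y Hy) as [z [Hz <-]].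
    exists z; split; auto. }
  exists (fun w => epsilon (inhabits w) (fun z => H z /\ Fn f n z = w)).
  intros w Hw; apply epsilon_spec, Hpre, Hw.
Qed.

Lemma Finv_F z : SigmaN N (fst z) -> I (snd z) -> Finv g (F f z) = z.
Proof.
  destruct z as [a t]; intros Ha Ht; unfold Finv, F; simpl; f_equal.
  - apply functional_extensionality; intros k; unfold shift_inv, Defs.shift; f_equal; lia.
  - unfold Defs.shift; simpl; apply g_f; auto.
Qed.

Lemma Finvn_Fn n z : SigmaN N (fst z) -> I (snd z) -> Finvn g n (Fn f n z) = z.
Proof.
  intros Hz Ht; induction n as [|n IH]; [reflexivity|].
  change (Fn f (S n) z) with (F f (Fn f n z)).
  unfold Finvn; rewrite Nat.iter_succ_r, Finv_F; [exact IH | |];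
    rewrite Fn_eq; simpl; [intros k; apply Hz | apply fcomp_I; auto].
Qed.

Lemma fibre_card_of_contraction : hyp_contraction f H ->
  exists M, (1 <= M)%nat /\ forall xi, card_le (fibre H xi) M.
Proof.
  intros [c [lam [Hc [Hlam Hder]]]].
  destruct (exists_pow_small c lam Hc Hlam) as [m [Hm Hcm]].
  destruct (dfcomp_equicontinuous m (1 / 4) ltac:(lra)) as [d [Hd Hdcont]].
  destruct (H_Fn_preimage_map m) as [T HT].
  assert (T_fibre : forall w1 w2, H w1 -> H w2 -> fst w1 = fst w2 -> fst (T w1) = fst (T w2)).
  { intros w1 w2 Hw1 Hw2 E.
    destruct (HT w1 Hw1) as [_ E1], (HT w2 Hw2) as [_ E2].
    rewrite <- E1, <- E2, !Fn_eq in E; apply (shiftn_inj m), E. }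
  apply (fibre_card_bounded H T (d / 2) (3 / 4)); [lra | lra | | | exact T_fibre |].
  - intros z Hz; apply H_SigmaN_I, Hz.
  - intros w Hw; apply HT, Hw.
  - intros w1 w2 Hw1 Hw2 E Hclose.
    pose proof (T_fibre w1 w2 Hw1 Hw2 E) as ET.
    destruct (HT w1 Hw1) as [Hz1 E1], (HT w2 Hw2) as [Hz2 E2].
    set (z1 := T w1) in *; set (z2 := T w2) in *; clearbody z1 z2; subst w1 w2.
    destruct z1 as [a p1], z2 as [b p2]; simpl in ET, Hclose; subst b.
    rewrite !Fn_eq; simpl.
    destruct (H_SigmaN_I _ Hz1) as [Ha Ip1], (H_SigmaN_I _ Hz2) as [_ Ip2]; simpl in *.
    destruct (Hder m a p1 Hm Hz1) as [D [HD HDsmall]].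
    rewrite (deriv_within_I_unique _ _ _ _ Ip1 HD (fcomp_deriv a m p1 Ha Ip1)) in HDsmall.
    rewrite Rabs_minus_sym, (Rabs_minus_sym p1).
    apply (contraction_near _ (dfcomp a m) p1 (d / 2)); auto; [intros; apply fcomp_deriv; auto | |].
    + intros t It Ht.
      specialize (Hdcont a t p1 Ha It Ip1 ltac:(lra)).
      pose proof (Rabs_triang_inv (dfcomp a m t) (dfcomp a m p1)); lra.
    + rewrite Rabs_minus_sym; lra.
Qed.

Lemma fibre_card_of_expansion : hyp_expansion f g H ->
  exists M, (1 <= M)%nat /\ forall xi, card_le (fibre H xi) M.
Proof.
  intros [c [lam [Hc [Hlam Hder]]]].
  destruct (exists_pow_small c lam Hc Hlam) as [m [Hm Hcm]].
  destruct (dfcomp_equicontinuous m (1 / 2) ltac:(lra)) as [d [Hd Hdcont]].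
  apply (fibre_card_bounded H (Fn f m) (3 / 4 * d) (2 / 3)); [lra | lra | | | |].
  - intros z Hz; apply H_SigmaN_I, Hz.
  - intros z Hz; apply H_Fn, Hz.
  - intros z1 z2 _ _ E; rewrite !Fn_eq; simpl; congruence.
  - intros [a p1] [b p2] Hz1 Hz2 E Hclose; simpl in E; subst b.
    pose proof (H_Fn m _ Hz1) as Hw1.
    rewrite Fn_eq in Hw1; rewrite !Fn_eq in Hclose; rewrite !Fn_eq; simpl in *.
    destruct (H_SigmaN_I _ Hz1) as [Ha Ip1], (H_SigmaN_I _ Hz2) as [_ Ip2]; simpl in *.
    set (P := fun q => snd (Finvn g m (shiftn m a, q))).
    assert (HP : forall t, I t -> P (fcomp f a m t) = t).
    { intros t It; unfold P.
      replace (shiftn m a, fcomp f a m t) with (Fn f m (a, t)) by (rewrite Fn_eq; reflexivity).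
      rewrite Finvn_Fn; auto. }
    destruct (Hder m (shiftn m a) _ Hm Hw1) as [D [HD HDsmall]].
    rewrite shift_invn_shiftn in HD.
    pose proof (deriv_within_left_inverse _ P p1 _ D Ip1 (fcomp_deriv a m p1 Ha Ip1) HD HP)
      as Hinv.
    assert (Hlarge : 2 <= Rabs (dfcomp a m p1)).
    { assert (Rabs D * Rabs (dfcomp a m p1) = 1) by (rewrite <- Rabs_mult, Hinv; apply Rabs_R1).
      pose proof (Rabs_pos (dfcomp a m p1)); nra. }
    assert (Hinj : forall x y, I x -> I y -> fcomp f a m x = fcomp f a m y -> x = y)
      by (intros x y Ix Iy Exy; rewrite <- (HP x Ix), <- (HP y Iy), Exy; reflexivity).
    rewrite Rabs_minus_sym, (Rabs_minus_sym (fcomp f a m p1)).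
    cut (3 / 2 * Rabs (p2 - p1) <= Rabs (fcomp f a m p2 - fcomp f a m p1)); [lra|].
    apply (expansion_near _ (dfcomp a m) p1 (d / 2)); auto; [intros; apply fcomp_deriv; auto | lra | |].
    + intros t It Ht.
      specialize (Hdcont a t p1 Ha It Ip1 ltac:(lra)).
      pose proof (Rabs_triang_inv (dfcomp a m p1) (dfcomp a m t)).
      rewrite Rabs_minus_sym in Hdcont; lra.
    + rewrite Rabs_minus_sym; lra.
Qed.

End SkewProduct.

Lemma C1_derivative_choice (N : nat) (f : nat -> R -> R) :
  (forall i, (i < N)%nat -> C1_on I (f i)) ->
  exists df : nat -> R -> R,
    (forall i x, (i < N)%nat -> I x -> deriv_within I (f i) x (df i x)) /\
    (forall i x, (i < N)%nat -> I x -> continuous_within I (df i) x).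
Proof.
  intros HC1.
  set (Pdf := fun i (dh : R -> R) => (forall x, I x -> deriv_within I (f i) x (dh x)) /\
                                    (forall x, I x -> continuous_within I dh x)).
  exists (fun i => epsilon (inhabits (fun _ => 0)) (Pdf i)).
  assert (Hspec : forall i, (i < N)%nat -> Pdf i (epsilon (inhabits (fun _ => 0)) (Pdf i)))
    by (intros i Hi; apply epsilon_spec, HC1, Hi).
  split; intros i x Hi Hx; apply Hspec; auto.
Qed.

Theorem theoremA (N : nat) (f g : nat -> R -> R)
  (Hdiffeo : forall i : nat, (i < N)%nat -> C1_diffeo_onto_image (f i) (g i))
  (H : seqZ * R -> Prop)
  (HinLambda : forall z, H z -> Lambda N f z)
  (Hinv : F_invariant f H)
  (Hhyp : hyperbolic f g H) :
  exists M : nat, (1 <= M)%nat /\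
    forall xi : seqZ, SigmaN N xi -> card_le (fibre H xi) M.
Proof.
  assert (f_I : forall i x, (i < N)%nat -> I x -> I (f i x))
    by (intros i x Hi; apply (Hdiffeo i Hi)).
  assert (g_f : forall i x, (i < N)%nat -> I x -> g i (f i x) = x)
    by (intros i x Hi; apply (Hdiffeo i Hi)).
  destruct (C1_derivative_choice N f (fun i Hi => proj1 (proj2 (Hdiffeo i Hi))))
    as [df [df_deriv df_cont]].
  assert (Hbound : exists M, (1 <= M)%nat /\ forall xi, card_le (fibre H xi) M).
  { destruct Hhyp as [Hcontr | Hexp].
    - exact (fibre_card_of_contraction N f df f_I df_deriv df_cont H HinLambda Hinv Hcontr).
    - exact (fibre_card_of_expansion N f df f_I df_deriv df_cont g g_f H HinLambda Hinv Hexp). }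
  destruct Hbound as [M [HM Hcard]].
  exists M; split; [exact HM | intros xi _; apply Hcard].
Qed.
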